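(* Let $\Omega\subset\mathbb{R}^N$ be a Lipschitz open set, $s\in(1/2,1)$, $N>2s$, and let $\phi:\mathbb{R}\to\mathbb{R}$ be a Lipschitz convex function with $\phi(0)=0$. Then for every $u\in H^s_0(\Omega)$, $$(-\Delta)^s_\Omega\phi(u)\leq\phi'(u)(-\Delta)^s_\Omega u\quad\text{weakly in }\Omega.$$
   Context: $c_{N,s}$ is the standard normalization constant of the fractional Laplacian; $Q_{N,s,\Omega}(u)=\frac{c_{N,s}}{2}\int_\Omega\int_\Omega\frac{(u(x)-u(y))^2}{|x-y|^{N+2s}}dxdy$; $H^s_0(\Omega)$ is the completion of $C^\infty_c(\Omega)$ in the norm $(\|u\|_{L^2(\Omega)}^2+Q_{N,s,\Omega}(u))^{1/2}$. The regional fractional Laplacian is $(-\Delta)^s_\Omega u(x)=c_{N,s}\,\mathrm{P.V.}\int_\Omega\frac{u(x)-u(y)}{|x-y|^{N+2s}}dy$, $x\in\Omega$, understood in the weak sense through the bilinear form $\frac{c_{N,s}}{2}\int_\Omega\int_\Omega\frac{(u(x)-u(y))(\varphi(x)-\varphi(y))}{|x-y|^{N+2s}}dxdy$ tested against nonnegative test functions. Lipschitz open set: each boundary point has a neighbourhood described by a bi-Lipschitz map from a cylinder $B_r\times(-r,r)$ ($B_r$ an $(N-1)$-ball) sending the upper half into $\Omega$ and the flat part into $\partial\Omega$. *)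

From HB Require Import structures.
From mathcomp Require Import all_boot all_order all_algebra.
From mathcomp Require Import all_classical all_reals all_analysis.
Set Implicit Arguments. Unset Strict Implicit. Unset Printing Implicit Defensive.
Import Order.TTheory GRing.Theory Num.Theory.
Import numFieldNormedType.Exports.
Local Open Scope classical_set_scope.
Local Open Scope ring_scope.

Section Defs.
Variable R : realType.

Definition eucl (N : nat) (v : 'rV[R]_N) : R := Num.sqrt (\sum_(i < N) v 0 i ^+ 2).

(* iint n f = \int dx_1 ... \int dx_n f [:: x_1; ...; x_n]  (for nonnegative f
   this is the n-dimensional Lebesgue integral by Tonelli's theorem) *)
Fixpoint iint (n : nat) (f : seq R -> \bar R) : \bar R :=
  match n with
  | 0 => f [::]
  | n'.+1 => (\int[@lebesgue_measure R]_x iint n' (fun s => f (x :: s)))%E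
  end.

Definition rowseq (N : nat) (s : seq R) : 'rV[R]_N := \row_(i < N) nth 0 s i.

Definition int1 (N : nat) (f : 'rV[R]_N -> \bar R) : \bar R :=
  iint N (fun s => f (rowseq N s)).

Definition int2 (N : nat) (F : 'rV[R]_N -> 'rV[R]_N -> \bar R) : \bar R :=
  iint (N + N) (fun s => F (rowseq N (take N s)) (rowseq N (drop N s))).

Definition dint_Om (N : nat) (Om : set 'rV[R]_N) (F : 'rV[R]_N -> 'rV[R]_N -> R)
  : \bar R :=
  (int2 (fun x y => if (x \in Om) && (y \in Om) then (Num.max (F x y) 0)%:E else 0%E)
   - int2 (fun x y => if (x \in Om) && (y \in Om) then (Num.max (- F x y) 0)%:E else 0%E))%E.

Definition measurableRN (N : nat) (u : 'rV[R]_N -> R) : Prop :=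
  measurable_fun [set: N.-tuple R] (fun t : N.-tuple R => u (\row_(i < N) tnth t i)).

Definition Gamma (z : R) : R :=
  fine (\int[@lebesgue_measure R]_(t in `]0%R, +oo[%classic)
          ((t `^ (z - 1)) * expR (- t))%:E)%E.

Definition cNs (N : nat) (s : R) : R :=
  s * (4 `^ s) * Gamma (N%:R / 2 + s) / (pi `^ (N%:R / 2) * Gamma (1 - s)).

Definition kern (N : nat) (s : R) (x y : 'rV[R]_N) : R :=
  eucl (x - y) `^ (- (N%:R + 2 * s)).

Definition ei (N : nat) (i : 'I_N) : 'rV[R]_N := delta_mx 0 i.

Fixpoint Ck (N : nat) (k : nat) (f : 'rV[R]_N -> R) : Prop :=
  continuous f /\
  match k with
  | 0 => True
  | k'.+1 => forall i : 'I_N, (forall x, derivable f x (ei i)) /\ Ck k' ('D_(ei i) f)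
  end.

Definition smooth (N : nat) (f : 'rV[R]_N -> R) : Prop := forall k, Ck k f.

Definition Cc_infty (N : nat) (Om : set 'rV[R]_N) (f : 'rV[R]_N -> R) : Prop :=
  smooth f /\ exists K : set 'rV[R]_N, compact K /\ K `<=` Om /\
                (forall x, ~ K x -> f x = 0).

Definition L2sq_Om (N : nat) (Om : set 'rV[R]_N) (w : 'rV[R]_N -> R) : \bar R :=
  int1 (fun x => if x \in Om then (w x ^+ 2)%:E else 0%E).

Definition Q_Om (N : nat) (s : R) (Om : set 'rV[R]_N) (w : 'rV[R]_N -> R) : \bar R :=
  ((cNs N s / 2)%:E *
   int2 (fun x y => if (x \in Om) && (y \in Om)
                    then (((w x - w y) ^+ 2) * kern s x y)%:E else 0%E))%E.

(* H^s_0(Omega), the completion of C_c^infty(Omega) for (||.||_2^2 + Q)^(1/2),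
   realized inside L^2(Omega) *)
Definition Hs0 (N : nat) (s : R) (Om : set 'rV[R]_N) (u : 'rV[R]_N -> R) : Prop :=
  measurableRN u /\
  exists phi : nat -> 'rV[R]_N -> R,
    (forall k, Cc_infty Om (phi k)) /\
    ((fun k => (L2sq_Om Om (fun x => (u x - phi k x)%R) + Q_Om s Om (fun x => (u x - phi k x)%R))%E) @ \oo --> 0%E).

(* bilinear form of the regional fractional Laplacian *)
Definition EOm (N : nat) (s : R) (Om : set 'rV[R]_N) (v w : 'rV[R]_N -> R) : \bar R :=
  ((cNs N s / 2)%:E *
   dint_Om Om (fun x y => ((v x - v y) * (w x - w y) * kern s x y)%R))%E.

(* Cylinder B_r x (-r,r) in R^{N-1} x R; coordinate 0 is the vertical one *)
Definition vert (N : nat) (z : 'rV[R]_N) : R := \sum_(i < N | val i == 0%N) z 0 i.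
Definition horiz2 (N : nat) (z : 'rV[R]_N) : R := \sum_(i < N | val i != 0%N) z 0 i ^+ 2.
Definition cyl (N : nat) (r : R) : set 'rV[R]_N :=
  [set z | horiz2 z < r ^+ 2 /\ `|vert z| < r].

Definition lipschitz_open (N : nat) (Om : set 'rV[R]_N) : Prop :=
  open Om /\
  forall p, (closure Om `\` Om) p ->
    exists (r L : R) (T : 'rV[R]_N -> 'rV[R]_N),
      0 < r /\ 0 < L /\
      (forall z w, cyl r z -> cyl r w ->
         eucl (z - w) <= L * eucl (T z - T w) /\ eucl (T z - T w) <= L * eucl (z - w)) /\
      nbhs p (T @` cyl r) /\
      T @` [set z | cyl r z /\ 0 < vert z] = (T @` cyl r) `&` Om /\
      T @` [set z | cyl r z /\ vert z = 0] = (T @` cyl r) `&` (closure Om `\` Om).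

End Defs.

From HB Require Import structures.
From mathcomp Require Import all_boot all_order all_algebra.
From mathcomp Require Import all_classical all_reals all_analysis.
From mathcomp Require Import ring lra.
Import Order.TTheory GRing.Theory Num.Theory.
Import numFieldNormedType.Exports.
Local Open Scope classical_set_scope.
Local Open Scope ring_scope.

(* The inequality holds already between the integrands: if g is a subgradient
   of phi and p, q >= 0, then
     (phi a - phi b) (p - q) <= (a - b) (g a p - g b q),
   the difference being p times the subgradient inequality at a plus q times
   the one at b.  Multiplying by the positive kernel and integrating over
   Om x Om, which is monotone on positive and negative parts separately,
   gives the weak inequality. *)

Lemma subgradient_cross_le (R : realDomainType) (phi g : R -> R) (a b p q : R) :
  (forall t r, phi t + g t * (r - t) <= phi r) -> 0 <= p -> 0 <= q ->
  (phi a - phi b) * (p - q) <= (a - b) * (g a * p - g b * q).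
Proof.
move=> subg p_ge0 q_ge0.
have at_a : 0 <= p * (phi b - phi a - g a * (b - a)).
  by apply: mulr_ge0 => //; have := subg a b; lra.
have at_b : 0 <= q * (phi a - phi b - g b * (a - b)).
  by apply: mulr_ge0 => //; have := subg b a; lra.
rewrite -subr_ge0.
have -> : (a - b) * (g a * p - g b * q) - (phi a - phi b) * (p - q) =
  p * (phi b - phi a - g a * (b - a)) + q * (phi a - phi b - g b * (a - b)) by ring.
exact: addr_ge0.
Qed.

(* No measurability is required: the integral of a nonnegative function is the
   supremum of the integrals of the simple functions below it. *)
Lemma ge0_le_integralT (d : measure_display) (T : measurableType d) (R : realType)
    (mu : {measure set T -> \bar R}) (f h : T -> \bar R) :
  (forall x, (0 <= f x)%E) -> (forall x, (f x <= h x)%E) ->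
  (\int[mu]_x f x <= \int[mu]_x h x)%E.
Proof.
move=> f_ge0 le_fh.
have h_ge0 x : (0 <= h x)%E by apply: le_trans (f_ge0 x) (le_fh x).
rewrite !ge0_integralTE //; apply: ereal_sup_le.
by move=> _ [k le_kf <-]; exists k => // x; apply: le_trans (le_kf x) (le_fh x).
Qed.

Section iterated_integral.
Variable R : realType.

Lemma iint_ge0 (n : nat) (f : seq R -> \bar R) :
  (forall t, (0 <= f t)%E) -> (0 <= iint n f)%E.
Proof.
elim: n f => [|n IHn] f f_ge0 /=; first exact: f_ge0.
by apply: integral_ge0 => x _; apply: IHn.
Qed.

Lemma le_iint (n : nat) (f h : seq R -> \bar R) :
  (forall t, (0 <= f t)%E) -> (forall t, (f t <= h t)%E) -> (iint n f <= iint n h)%E.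
Proof.
elim: n f h => [|n IHn] f h f_ge0 le_fh /=; first exact: le_fh.
apply: ge0_le_integralT => x; first exact: iint_ge0.
exact: IHn.
Qed.

Lemma le_dint_Om (N : nat) (Om : set 'rV[R]_N) (F G : 'rV[R]_N -> 'rV[R]_N -> R) :
  (forall x y, F x y <= G x y) -> (dint_Om Om F <= dint_Om Om G)%E.
Proof.
move=> le_FG; rewrite /dint_Om /int2; apply: leeB; apply: le_iint => t;
  by case: ifP => // _; rewrite lee_fin ?le_max2 ?lerN2 ?le_max ?lexx ?orbT.
Qed.

End iterated_integral.

Lemma Gamma_ge0 (R : realType) (z : R) : 0 <= Gamma z.
Proof.
apply: fine_ge0; apply: integral_ge0 => t _.
by rewrite lee_fin mulr_ge0 ?powR_ge0 ?expR_ge0.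
Qed.

Lemma cNs_ge0 (R : realType) (N : nat) (s : R) : 0 <= s -> 0 <= cNs N s.
Proof.
move=> s_ge0; rewrite /cNs.
by rewrite divr_ge0 ?mulr_ge0 ?powR_ge0 ?Gamma_ge0.
Qed.

Theorem proposition2p2 (R : realType) (N : nat) (Om : set 'rV[R]_N) (s : R)
  (phi g : R -> R) (u : 'rV[R]_N -> R) :
  lipschitz_open Om ->
  1 / 2 < s -> s < 1 -> 2 * s < N%:R ->
  (exists L : R, forall a b, `|phi a - phi b| <= L * `|a - b|) ->
  (forall a b t, 0 <= t <= 1 -> phi (t * a + (1 - t) * b) <= t * phi a + (1 - t) * phi b) ->
  phi 0 = 0 ->
  (* g = phi' : a (sub)derivative of phi at every point *)
  (forall t r, phi t + g t * (r - t) <= phi r) ->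
  Hs0 s Om u ->
  forall psi : 'rV[R]_N -> R, Cc_infty Om psi -> (forall x, 0 <= psi x) ->
    (EOm s Om (phi \o u) psi <= EOm s Om u (fun x => (g (u x) * psi x)%R))%E.
Proof.
move=> _ half_lt_s _ _ _ _ _ subg _ psi _ psi_ge0.
have s_ge0 : 0 <= s by lra.
apply: lee_wpmul2l; first by rewrite lee_fin divr_ge0 ?cNs_ge0.
apply: le_dint_Om => x y; apply: ler_wpM2r; first exact: powR_ge0.
exact: subgradient_cross_le.
Qed.
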